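(* Let $P:\mathcal C^{op}\to\mathbf{Heyt}$ be a weak hyperdoctrine with full weak comprehensions and comprehensive diagonals, and suppose $\Psi_{\mathcal C}$ is a weak hyperdoctrine. Then for every $\alpha\in P(X\times Y)$ and all $\gamma,\beta\in P(A)$: $\{\forall^P_{pr_1}(\alpha)\}=\forall^{\Psi_{\mathcal C}}_{pr_1}\{\alpha\}$ and $\{\gamma\Rightarrow^P\beta\}=\{\gamma\}\Rightarrow^{\Psi_{\mathcal C}}\{\beta\}$ as elements of $\Psi_{\mathcal C}(X)$, resp. $\Psi_{\mathcal C}(A)$. If moreover the comprehensions are strong (monic) and $\mathrm{Sub}_{\mathcal C}$ is a weak hyperdoctrine, the same equalities hold with $\mathrm{Sub}_{\mathcal C}$ in place of $\Psi_{\mathcal C}$.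
   Context: A weak hyperdoctrine is an elementary doctrine (equality predicates $\delta_A$, written $=_A$) over a weakly cartesian closed base with Heyting fibres and reindexing, and left and right adjoints $\exists_{pr_1},\forall_{pr_1}$ to reindexing along product projections $pr_1:X\times Y\to X$ satisfying Beck–Chevalley. A weak comprehension of $\alpha\in P(A)$ is an arrow $\{\alpha\}:Z\to A$ with $\top\le P_{\{\alpha\}}(\alpha)$ through which every $f$ with $\top\le P_f(\alpha)$ factors (not necessarily uniquely); it is strong if $\{\alpha\}$ is monic; full weak comprehensions: all exist and $\alpha\le\beta$ whenever $\{\alpha\}$ factors through $\{\beta\}$. Comprehensive diagonals: $f=g$ whenever $\top\vdash f(x)=_Yg(x)$. $\Psi_{\mathcal C}$ sends $A$ to the poset reflection of $\mathcal C/A$, reindexing by weak pullback; $\mathrm{Sub}_{\mathcal C}$ is the subobject doctrine. In the equalities, $\{\alpha\}$ denotes the class $[\{\alpha\}]$ in $\Psi_{\mathcal C}$ (resp. the subobject in $\mathrm{Sub}_{\mathcal C}$), and superscripts indicate in which doctrine the operation is computed. *)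

Set Implicit Arguments.
Unset Strict Implicit.

(* Weakly cartesian closed categories: a category with (strict) finite  *)
(* products and weak exponentials.  Equality of arrows is Leibniz.       *)
Record WCCC : Type := MkWCCC {
  Ob : Type;
  Hom : Ob -> Ob -> Type;
  idm : forall A, Hom A A;
  comp : forall A B D, Hom B D -> Hom A B -> Hom A D;
  comp_idl : forall A B (f : Hom A B), comp (idm B) f = f;
  comp_idr : forall A B (f : Hom A B), comp f (idm A) = f;
  comp_assoc : forall A B D E (f : Hom A B) (g : Hom B D) (h : Hom D E),
      comp h (comp g f) = comp (comp h g) f;
  term : Ob;
  bang : forall A, Hom A term;
  bang_uniq : forall A (f : Hom A term), f = bang A;
  prod : Ob -> Ob -> Ob;
  pr1 : forall A B, Hom (prod A B) A;
  pr2 : forall A B, Hom (prod A B) B;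
  pair : forall X A B, Hom X A -> Hom X B -> Hom X (prod A B);
  pr1_pair : forall X A B (f : Hom X A) (g : Hom X B), comp (pr1 A B) (pair f g) = f;
  pr2_pair : forall X A B (f : Hom X A) (g : Hom X B), comp (pr2 A B) (pair f g) = g;
  pair_eta : forall X A B (h : Hom X (prod A B)),
      pair (comp (pr1 A B) h) (comp (pr2 A B) h) = h;
  (* weak exponential  wexp B A = B^A  with evaluation wev *)
  wexp : Ob -> Ob -> Ob;
  wev : forall A B, Hom (prod (wexp B A) A) B;
  wcurry : forall D A B (f : Hom (prod D A) B),
      exists h : Hom D (wexp B A),
        comp (wev A B) (pair (comp h (pr1 D A)) (pr2 D A)) = f
}.

Arguments Hom {w} _ _.
Arguments idm {w} A.
Arguments comp {w A B D} _ _.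
Arguments term {w}.
Arguments bang {w} A.
Arguments prod {w} _ _.
Arguments pr1 {w A B}.
Arguments pr2 {w A B}.
Arguments pair {w X A B} _ _.

Notation "g ∘ f" := (comp g f) (at level 40, left associativity).

Section Derived.
Variable C : WCCC.

Definition pmap (A B A' B' : Ob C) (f : Hom A A') (g : Hom B B')
  : Hom (prod A B) (prod A' B') := pair (f ∘ pr1) (g ∘ pr2).

Definition diag (A : Ob C) : Hom A (prod A A) := pair (idm A) (idm A).

Definition p13 (A B : Ob C) : Hom (prod (prod A B) (prod A B)) (prod A A) :=
  pair (pr1 ∘ pr1) (pr1 ∘ pr2).
Definition p24 (A B : Ob C) : Hom (prod (prod A B) (prod A B)) (prod B B) :=
  pair (pr2 ∘ pr1) (pr2 ∘ pr2).

Definition mono (Z A : Ob C) (m : Hom Z A) : Prop :=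
  forall W (u v : Hom W Z), m ∘ u = m ∘ v -> u = v.

Definition factors (Z W A : Ob C) (c : Hom Z A) (d : Hom W A) : Prop :=
  exists h : Hom Z W, d ∘ h = c.
End Derived.

Arguments pmap {C A B A' B'} _ _.
Arguments diag {C} A.
Arguments p13 {C} A B.
Arguments p24 {C} A B.
Arguments mono {C Z A} _.
Arguments factors {C Z W A} _ _.

(* Everything is stated up to the equivalence of the preorder, so that  *)
(* the same notion applies to Psi_C and Sub_C (whose fibres are the     *)
(* poset reflections of the preorders below).                           *)
Section Hyperdoctrine.
Variable C : WCCC.
Variable F : Ob C -> Type.
Variable le : forall A, F A -> F A -> Prop.
Variable re : forall A B, Hom A B -> F B -> F A.

Arguments le {A} _ _.
Arguments re {A B} _ _.

Definition feq (A : Ob C) (x y : F A) : Prop := le x y /\ le y x.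

Record WeakHyperdoctrine : Type := {
  le_refl : forall A (x : F A), le x x;
  le_trans : forall A (x y z : F A), le x y -> le y z -> le x z;
  re_mono : forall A B (f : Hom A B) (x y : F B), le x y -> le (re f x) (re f y);
  re_id : forall A (x : F A), feq (re (idm A) x) x;
  re_comp : forall A B D (f : Hom A B) (g : Hom B D) (x : F D),
      feq (re (g ∘ f) x) (re f (re g x));
  top : forall A, F A;
  bot : forall A, F A;
  meet : forall A, F A -> F A -> F A;
  join : forall A, F A -> F A -> F A;
  impl : forall A, F A -> F A -> F A;
  top_max : forall A (x : F A), le x (top A);
  bot_min : forall A (x : F A), le (bot A) x;
  meet_spec : forall A (x y z : F A), le z (meet x y) <-> (le z x /\ le z y);
  join_spec : forall A (x y z : F A), le (join x y) z <-> (le x z /\ le y z);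
  impl_spec : forall A (x y z : F A), le z (impl x y) <-> le (meet z x) y;
  re_top : forall A B (f : Hom A B), feq (re f (top B)) (top A);
  re_bot : forall A B (f : Hom A B), feq (re f (bot B)) (bot A);
  re_meet : forall A B (f : Hom A B) (x y : F B),
      feq (re f (meet x y)) (meet (re f x) (re f y));
  re_join : forall A B (f : Hom A B) (x y : F B),
      feq (re f (join x y)) (join (re f x) (re f y));
  re_impl : forall A B (f : Hom A B) (x y : F B),
      feq (re f (impl x y)) (impl (re f x) (re f y));
  ex : forall X Y, F (prod X Y) -> F X;
  fa : forall X Y, F (prod X Y) -> F X;
  ex_adj : forall X Y (a : F (prod X Y)) (b : F X),
      le (ex a) b <-> le a (re pr1 b);
  fa_adj : forall X Y (a : F (prod X Y)) (b : F X),
      le b (fa a) <-> le (re pr1 b) a;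
  ex_BC : forall X' X Y (f : Hom X' X) (a : F (prod X Y)),
      feq (re f (ex a)) (ex (re (pmap f (idm Y)) a));
  fa_BC : forall X' X Y (f : Hom X' X) (a : F (prod X Y)),
      feq (re f (fa a)) (fa (re (pmap f (idm Y)) a));
  delta : forall A, F (prod A A);
  delta_refl : forall A, le (top A) (re (diag A) (delta A));
  delta_subst : forall A (a : F A), le (meet (re pr1 a) (delta A)) (re pr2 a);
  delta_prod : forall A B,
      le (meet (re (p13 A B) (delta A)) (re (p24 A B) (delta B))) (delta (prod A B))
}.


Definition isWComp (H : WeakHyperdoctrine) (A : Ob C) (alpha : F A)
    (Z : Ob C) (c : Hom Z A) : Prop :=
  le (top H Z) (re c alpha) /\
  forall W (f : Hom W A), le (top H W) (re f alpha) -> factors f c.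

Definition FullWeakComprehensions (H : WeakHyperdoctrine) : Prop :=
  (forall A (alpha : F A), exists Z (c : Hom Z A), isWComp H alpha c) /\
  (forall A (alpha beta : F A) Z (c : Hom Z A) W (d : Hom W A),
      isWComp H alpha c -> isWComp H beta d -> factors c d -> le alpha beta).

Definition StrongComprehensions (H : WeakHyperdoctrine) : Prop :=
  forall A (alpha : F A), exists Z (c : Hom Z A), isWComp H alpha c /\ mono c.

Definition ComprehensiveDiagonals (H : WeakHyperdoctrine) : Prop :=
  forall X Y (f g : Hom X Y), le (top H X) (re (pair f g) (delta H Y)) -> f = g.

Definition FibresPosets : Prop :=
  forall A (x y : F A), le x y -> le y x -> x = y.
End Hyperdoctrine.

Arguments feq {C F} le {A} _ _.
Arguments top {C F le re} w A.
Arguments impl {C F le re} w {A} _ _.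
Arguments fa {C F le re} w {X Y} _.
Arguments delta {C F le re} w A.
Arguments isWComp {C F le re} H {A} alpha {Z} c.
Arguments FullWeakComprehensions {C F le re} H.
Arguments StrongComprehensions {C F le re} H.
Arguments ComprehensiveDiagonals {C F le re} H.
Arguments FibresPosets {C F} le.

(* The doctrine Psi_C: fibre over A = preorder reflected to C/A,       *)
(* reindexing by (chosen) weak pullbacks.                               *)
Record WeakPullbacks (C : WCCC) : Type := {
  wpbO : forall A B D (f : Hom A D) (g : Hom B D), Ob C;
  wpb1 : forall A B D (f : Hom A D) (g : Hom B D), Hom (wpbO f g) A;
  wpb2 : forall A B D (f : Hom A D) (g : Hom B D), Hom (wpbO f g) B;
  wpb_comm : forall A B D (f : Hom A D) (g : Hom B D), f ∘ wpb1 f g = g ∘ wpb2 f g;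
  wpb_univ : forall A B D (f : Hom A D) (g : Hom B D) W (u : Hom W A) (v : Hom W B),
      f ∘ u = g ∘ v -> exists h : Hom W (wpbO f g), wpb1 f g ∘ h = u /\ wpb2 f g ∘ h = v
}.

Section Psi.
Variable C : WCCC.

Definition PsiF (A : Ob C) : Type := { Z : Ob C & Hom Z A }.
Definition PsiLe (A : Ob C) (x y : PsiF A) : Prop := factors (projT2 x) (projT2 y).
Definition psi (A Z : Ob C) (c : Hom Z A) : PsiF A := existT _ Z c.
Definition PsiRe (wp : WeakPullbacks C) (A B : Ob C) (f : Hom A B) (x : PsiF B) : PsiF A :=
  existT _ (wpbO wp f (projT2 x)) (wpb1 wp f (projT2 x)).
End Psi.

Arguments psi {C A Z} c.
Arguments PsiF C A : clear implicits.
Arguments PsiLe C A : clear implicits.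

(* The subobject doctrine Sub_C: monos into A preordered by factoring   *)
(* (poset reflection = subobjects), reindexing by (chosen) pullbacks    *)
(* of monos.                                                            *)
Record MonoPullbacks (C : WCCC) : Type := {
  mpbO : forall A B Z (g : Hom B A) (m : Hom Z A), mono m -> Ob C;
  mpb1 : forall A B Z (g : Hom B A) (m : Hom Z A) (hm : mono m), Hom (mpbO g hm) B;
  mpb2 : forall A B Z (g : Hom B A) (m : Hom Z A) (hm : mono m), Hom (mpbO g hm) Z;
  mpb_comm : forall A B Z (g : Hom B A) (m : Hom Z A) (hm : mono m),
      g ∘ mpb1 g hm = m ∘ mpb2 g hm;
  mpb_ex : forall A B Z (g : Hom B A) (m : Hom Z A) (hm : mono m) W (u : Hom W B) (v : Hom W Z),
      g ∘ u = m ∘ v -> exists h : Hom W (mpbO g hm), mpb1 g hm ∘ h = u /\ mpb2 g hm ∘ h = v;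
  mpb_uniq : forall A B Z (g : Hom B A) (m : Hom Z A) (hm : mono m) W (h h' : Hom W (mpbO g hm)),
      mpb1 g hm ∘ h = mpb1 g hm ∘ h' -> mpb2 g hm ∘ h = mpb2 g hm ∘ h' -> h = h'
}.

Section Sub.
Variable C : WCCC.

Definition SubF (A : Ob C) : Type := { Z : Ob C & { m : Hom Z A | mono m } }.
Definition SubLe (A : Ob C) (x y : SubF A) : Prop :=
  factors (proj1_sig (projT2 x)) (proj1_sig (projT2 y)).
Definition sub (A Z : Ob C) (m : Hom Z A) (hm : mono m) : SubF A :=
  existT _ Z (exist _ m hm).

Lemma mpb1_mono (pb : MonoPullbacks C) A B Z (g : Hom B A) (m : Hom Z A) (hm : mono m) :
  mono (mpb1 pb g hm).
Proof.
  intros W u v E.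
  apply (mpb_uniq E).
  apply hm.
  rewrite !comp_assoc, <- !(mpb_comm pb g hm), <- !comp_assoc, E. reflexivity.
Qed.

Definition SubRe (pb : MonoPullbacks C) (A B : Ob C) (f : Hom A B) (x : SubF B) : SubF A :=
  existT _ (mpbO pb f (proj2_sig (projT2 x)))
    (exist _ (mpb1 pb f (proj2_sig (projT2 x))) (@mpb1_mono pb _ _ _ f _ (proj2_sig (projT2 x)))).
End Sub.

Arguments sub {C A Z} m hm.
Arguments SubF C A : clear implicits.
Arguments SubLe C A : clear implicits.


(* A weak comprehension turns truth of a predicate into factorisation: f
   factors through {alpha} iff alpha holds on f. Through Beck-Chevalley and
   the adjunction, f factors through {forall alpha} iff f x id factors through
   {alpha}, and, using fullness, f factors through {gamma => beta} iff every
   comprehension e of gamma reindexed along f has f o e factoring through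
   {beta}. These are precisely the universal properties of the right adjoint
   and of implication in any doctrine whose order is factorisation of arrows
   and whose reindexing is by weak pullbacks, such as Psi_C and Sub_C. *)

Section Factorisation.
Context {C : WCCC}.

Lemma factors_refl (A Z : Ob C) (f : Hom Z A) : factors f f.
Proof. exists (idm Z); apply comp_idr. Qed.

Lemma factors_trans (A Z1 Z2 Z3 : Ob C) (f : Hom Z1 A) (g : Hom Z2 A) (h : Hom Z3 A) :
  factors f g -> factors g h -> factors f h.
Proof.
  intros [u <-] [v <-]; exists (v ∘ u); apply comp_assoc.
Qed.

Lemma factors_comp (A B W : Ob C) (f : Hom B A) (u : Hom W B) : factors (f ∘ u) f.
Proof. exists u; reflexivity. Qed.

Lemma pr1_pmap_id (V X Y : Ob C) (f : Hom V X) : pr1 ∘ pmap f (idm Y) = f ∘ pr1.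
Proof. apply pr1_pair. Qed.

Lemma mono_comp {A B D : Ob C} {f : Hom B D} {g : Hom A B} :
  mono f -> mono g -> mono (f ∘ g).
Proof.
  intros Hf Hg W u v E; apply Hg, Hf; rewrite !comp_assoc; exact E.
Qed.

End Factorisation.

Section Comprehension.
Context {C : WCCC} {F : Ob C -> Type} {le : forall A, F A -> F A -> Prop}
  {re : forall A B, Hom A B -> F B -> F A} (P : WeakHyperdoctrine le re).

Local Notation "x ⊑ y" := (le _ x y) (at level 70).
Local Notation "⊤" := (top P _).

Lemma le_re_comp (A B D : Ob C) (f : Hom A B) (g : Hom B D) (x : F A) (a : F D) :
  x ⊑ re _ _ (g ∘ f) a <-> x ⊑ re _ _ f (re _ _ g a).
Proof.
  split; intro H; eapply (le_trans P); [exact H| |exact H|]; apply (re_comp P).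
Qed.

Lemma top_le_re (A B : Ob C) (f : Hom A B) (a : F B) : ⊤ ⊑ a -> ⊤ ⊑ re _ _ f a.
Proof.
  intro H; eapply (le_trans P); [apply (re_top P f)|]; exact (re_mono P f H).
Qed.

Lemma wcomp_factorsP {A Z W : Ob C} {alpha : F A} {c : Hom Z A} {f : Hom W A} :
  isWComp P alpha c -> factors f c <-> ⊤ ⊑ re _ _ f alpha.
Proof.
  intros [Hc Huniv]; split; [|apply Huniv].
  intros [h <-]; apply le_re_comp, top_le_re, Hc.
Qed.

Lemma fa_counit {X Y : Ob C} (alpha : F (prod X Y)) : re _ _ pr1 (fa P alpha) ⊑ alpha.
Proof. apply (fa_adj P), (le_refl P). Qed.

Lemma top_le_fa_reindex (V X Y : Ob C) (f : Hom V X) (alpha : F (prod X Y)) :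
  ⊤ ⊑ re _ _ (pmap f (idm Y)) alpha -> ⊤ ⊑ re _ _ f (fa P alpha).
Proof.
  intro H; eapply (le_trans P); [|apply (fa_BC P)].
  apply (fa_adj P); eapply (le_trans P); [apply (top_max P)|exact H].
Qed.

Section ForallComprehension.
Context {X Y Z W : Ob C} {alpha : F (prod X Y)} {c : Hom Z (prod X Y)} {d : Hom W X}.
Hypotheses (Hc : isWComp P alpha c) (Hd : isWComp P (fa P alpha) d).

Lemma wcomp_fa_factors (V : Ob C) (f : Hom V X) :
  factors (pmap f (idm Y)) c -> factors f d.
Proof.
  intro H; apply (wcomp_factorsP Hd), top_le_fa_reindex, (wcomp_factorsP Hc), H.
Qed.

Lemma wcomp_fa_factors_pr1 (Q : Ob C) (q : Hom Q (prod X Y)) :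
  factors (pr1 ∘ q) d -> factors q c.
Proof.
  intro H; apply (wcomp_factorsP Hc).
  eapply (le_trans P); [|exact (re_mono P q (fa_counit alpha))].
  apply le_re_comp, (wcomp_factorsP Hd), H.
Qed.

End ForallComprehension.

Section ImplComprehension.
Context {A Zg Zb Zi : Ob C} {gamma beta : F A} {cg : Hom Zg A} {cb : Hom Zb A} {ci : Hom Zi A}.
Hypotheses (Hg : isWComp P gamma cg) (Hb : isWComp P beta cb)
  (Hi : isWComp P (impl P gamma beta) ci).

Lemma wcomp_impl_mp {M : Ob C} {m : Hom M A} :
  factors m ci -> factors m cg -> factors m cb.
Proof.
  intros Fi Fg; apply (wcomp_factorsP Hb).
  eapply (le_trans P); [|apply (re_mono P m), (impl_spec P), (le_refl P)].
  eapply (le_trans P); [|apply (re_meet P)].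
  apply (meet_spec P); split.
  - exact (proj1 (wcomp_factorsP Hi) Fi).
  - exact (proj1 (wcomp_factorsP Hg) Fg).
Qed.

End ImplComprehension.

Lemma wcomp_reindex_factors {A V E Z : Ob C} {gamma : F A} {cg : Hom Z A}
    {f : Hom V A} {e : Hom E V} :
  isWComp P gamma cg -> isWComp P (re _ _ f gamma) e -> factors (f ∘ e) cg.
Proof.
  intros Hg He; apply (wcomp_factorsP Hg), le_re_comp, (proj1 He).
Qed.

Hypothesis Pfull : FullWeakComprehensions P.

Lemma wcomp_le {A E : Ob C} {alpha : F A} (beta : F A) {e : Hom E A} :
  isWComp P alpha e -> ⊤ ⊑ re _ _ e beta -> alpha ⊑ beta.
Proof.
  intros He H.
  destruct (proj1 Pfull A beta) as (E' & e' & He').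
  apply (proj2 Pfull _ _ _ _ _ _ _ He He'), (proj2 He'), H.
Qed.

(* Fullness turns the factorisation of f ∘ e through {beta} into
   f^* gamma ⊑ f^* beta. *)
Lemma wcomp_impl_factors {A V E Zb Zi : Ob C} {gamma beta : F A}
    {cb : Hom Zb A} {ci : Hom Zi A} {f : Hom V A} {e : Hom E V} :
  isWComp P beta cb -> isWComp P (impl P gamma beta) ci ->
  isWComp P (re _ _ f gamma) e -> factors (f ∘ e) cb -> factors f ci.
Proof.
  intros Hb Hi He Fb; apply (wcomp_factorsP Hi).
  assert (Hle : re _ _ f gamma ⊑ re _ _ f beta).
  { apply (wcomp_le _ He), le_re_comp, (wcomp_factorsP Hb), Fb. }
  eapply (le_trans P); [|apply (re_impl P)].
  apply (impl_spec P).
  eapply (le_trans P); [|exact Hle].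
  exact (proj2 (proj1 (meet_spec P _ _ _) (le_refl P _))).
Qed.

End Comprehension.

Section ArrowDoctrine.
Context {C : WCCC} {F : Ob C -> Type} {le : forall A, F A -> F A -> Prop}
  {re : forall A B, Hom A B -> F B -> F A} (P : WeakHyperdoctrine le re).
Context {G : Ob C -> Type} {src : forall A, G A -> Ob C} {arr : forall A (x : G A), Hom (src A x) A}
  {leQ : forall A, G A -> G A -> Prop} {reQ : forall A B, Hom A B -> G B -> G A}
  (Q : WeakHyperdoctrine leQ reQ).
Hypothesis leQ_factors : forall A (x y : G A), leQ A x y <-> factors (arr A x) (arr A y).
Hypothesis factors_reQ : forall A B (f : Hom A B) (x : G B) W (u : Hom W A),
  factors u (arr A (reQ A B f x)) <-> factors (f ∘ u) (arr B x).

Theorem wcomp_fa_arrow {X Y : Ob C} (alpha : F (prod X Y)) (xc : G (prod X Y)) (xd : G X) :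
  isWComp P alpha (arr _ xc) -> isWComp P (fa P alpha) (arr _ xd) -> feq leQ xd (fa Q xc).
Proof.
  intros Hc Hd; split.
  - apply (fa_adj Q), leQ_factors, (wcomp_fa_factors_pr1 P Hc Hd), factors_reQ, factors_refl.
  - apply leQ_factors, (wcomp_fa_factors P Hc Hd).
    apply factors_trans with (g := arr _ (reQ _ _ pr1 (fa Q xc))).
    + apply factors_reQ; rewrite pr1_pmap_id; apply factors_comp.
    + apply leQ_factors, (fa_adj Q), (le_refl Q).
Qed.

Hypothesis Pfull : FullWeakComprehensions P.
Hypothesis arrow_comp_wcomp : forall A (x : G A) (beta : F (src A x)),
  exists (z : G A) (e : Hom (src A z) (src A x)), isWComp P beta e /\ arr A z = arr A x ∘ e.

Theorem wcomp_impl_arrow {A : Ob C} (gamma beta : F A) (xg xb xi : G A) :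
  isWComp P gamma (arr _ xg) -> isWComp P beta (arr _ xb) ->
  isWComp P (impl P gamma beta) (arr _ xi) -> feq leQ xi (impl Q xg xb).
Proof.
  intros Hg Hb Hi; split.
  - apply (impl_spec Q).
    destruct (proj1 (meet_spec Q _ _ _) (le_refl Q (meet Q xi xg))) as [Mi Mg].
    apply leQ_factors; apply leQ_factors in Mi, Mg.
    exact (wcomp_impl_mp P Hg Hb Hi Mi Mg).
  - set (x := impl Q xg xb).
    destruct (arrow_comp_wcomp _ x (re _ _ (arr _ x) gamma)) as (z & e & He & Ez).
    apply leQ_factors, (wcomp_impl_factors P Pfull Hb Hi He).
    rewrite <- Ez; apply leQ_factors.
    eapply (le_trans Q); [|apply (impl_spec Q), (le_refl Q)].
    apply (meet_spec Q); split; apply leQ_factors; rewrite Ez.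
    + apply factors_comp.
    + exact (wcomp_reindex_factors P Hg He).
Qed.

End ArrowDoctrine.

Lemma factors_PsiRe {C : WCCC} (wp : WeakPullbacks C) {A B : Ob C} (f : Hom A B)
    (x : PsiF C B) {W : Ob C} (u : Hom W A) :
  factors u (projT2 (PsiRe wp f x)) <-> factors (f ∘ u) (projT2 x).
Proof.
  split.
  - intros [h <-]; exists (wpb2 wp f (projT2 x) ∘ h); simpl.
    rewrite !comp_assoc, wpb_comm; reflexivity.
  - intros [v Ev]; destruct (wpb_univ wp (eq_sym Ev)) as (h & E1 & _).
    exists h; exact E1.
Qed.

Lemma factors_SubRe {C : WCCC} (pb : MonoPullbacks C) {A B : Ob C} (f : Hom A B)
    (x : SubF C B) {W : Ob C} (u : Hom W A) :
  factors u (proj1_sig (projT2 (SubRe pb f x))) <-> factors (f ∘ u) (proj1_sig (projT2 x)).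
Proof.
  destruct x as [Z [m hm]]; simpl; split.
  - intros [h <-]; exists (mpb2 pb f hm ∘ h).
    rewrite !comp_assoc, mpb_comm; reflexivity.
  - intros [v Ev]; destruct (mpb_ex pb hm (eq_sym Ev)) as (h & E1 & _).
    exists h; exact E1.
Qed.

Lemma psi_arrow_comp_wcomp {C : WCCC} {F : Ob C -> Type} {le : forall A, F A -> F A -> Prop}
    {re : forall A B, Hom A B -> F B -> F A} (P : WeakHyperdoctrine le re) :
  FullWeakComprehensions P ->
  forall A (x : PsiF C A) (beta : F (projT1 x)),
  exists (z : PsiF C A) (e : Hom (projT1 z) (projT1 x)),
    isWComp P beta e /\ projT2 z = projT2 x ∘ e.
Proof.
  intros Pfull A x beta; destruct (proj1 Pfull _ beta) as (E & e & He).
  exists (psi (projT2 x ∘ e)), e; split; [exact He | reflexivity].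
Qed.

Lemma sub_arrow_comp_wcomp {C : WCCC} {F : Ob C -> Type} {le : forall A, F A -> F A -> Prop}
    {re : forall A B, Hom A B -> F B -> F A} (P : WeakHyperdoctrine le re) :
  StrongComprehensions P ->
  forall A (x : SubF C A) (beta : F (projT1 x)),
  exists (z : SubF C A) (e : Hom (projT1 z) (projT1 x)),
    isWComp P beta e /\ proj1_sig (projT2 z) = proj1_sig (projT2 x) ∘ e.
Proof.
  intros Pstrong A [Z [m hm]] beta; destruct (Pstrong _ beta) as (E & e & He & he).
  exists (sub (m ∘ e) (mono_comp hm he)), e; split; [exact He | reflexivity].
Qed.

Theorem corollary2p5
  (C : WCCC)
  (F : Ob C -> Type)
  (le : forall A, F A -> F A -> Prop)
  (re : forall A B, Hom A B -> F B -> F A)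
  (P : WeakHyperdoctrine le re)
  (Pposet : FibresPosets le)
  (Pcomp : FullWeakComprehensions P)
  (Pdiag : ComprehensiveDiagonals P)
  (wp : WeakPullbacks C)
  (Psi : WeakHyperdoctrine (PsiLe C) (PsiRe wp)) :
  (forall (X Y : Ob C) (alpha : F (prod X Y))
          (Z : Ob C) (c : Hom Z (prod X Y)) (W : Ob C) (d : Hom W X),
      isWComp P alpha c -> isWComp P (fa P alpha) d ->
      feq (PsiLe C) (psi d) (fa Psi (psi c)))
  /\
  (forall (A : Ob C) (gamma beta : F A)
          (Zg : Ob C) (cg : Hom Zg A) (Zb : Ob C) (cb : Hom Zb A)
          (Zi : Ob C) (ci : Hom Zi A),
      isWComp P gamma cg -> isWComp P beta cb -> isWComp P (impl P gamma beta) ci ->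
      feq (PsiLe C) (psi ci) (impl Psi (psi cg) (psi cb)))
  /\
  (StrongComprehensions P ->
   forall (pb : MonoPullbacks C) (Sub : WeakHyperdoctrine (SubLe C) (SubRe pb)),
   (forall (X Y : Ob C) (alpha : F (prod X Y))
           (Z : Ob C) (c : Hom Z (prod X Y)) (hc : mono c)
           (W : Ob C) (d : Hom W X) (hd : mono d),
       isWComp P alpha c -> isWComp P (fa P alpha) d ->
       feq (SubLe C) (sub d hd) (fa Sub (sub c hc)))
   /\
   (forall (A : Ob C) (gamma beta : F A)
           (Zg : Ob C) (cg : Hom Zg A) (hg : mono cg)
           (Zb : Ob C) (cb : Hom Zb A) (hb : mono cb)
           (Zi : Ob C) (ci : Hom Zi A) (hi : mono ci),
       isWComp P gamma cg -> isWComp P beta cb -> isWComp P (impl P gamma beta) ci ->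
       feq (SubLe C) (sub ci hi) (impl Sub (sub cg hg) (sub cb hb)))).
Proof.
  split; [|split].
  - intros X Y alpha Z c W d.
    exact (wcomp_fa_arrow (arr := fun A x => projT2 x) P Psi (fun _ _ _ => iff_refl _)
             (fun _ _ f x _ u => factors_PsiRe wp f x u) alpha (psi c) (psi d)).
  - intros A gamma beta Zg cg Zb cb Zi ci.
    exact (wcomp_impl_arrow (arr := fun A x => projT2 x) P Psi (fun _ _ _ => iff_refl _)
             Pcomp (psi_arrow_comp_wcomp P Pcomp) gamma beta (psi cg) (psi cb) (psi ci)).
  - intros Pstrong pb Sub; split.
    + intros X Y alpha Z c hc W d hd.
      exact (wcomp_fa_arrow (arr := fun A x => proj1_sig (projT2 x)) P Sub
               (fun _ _ _ => iff_refl _) (fun _ _ f x _ u => factors_SubRe pb f x u)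
               alpha (sub c hc) (sub d hd)).
    + intros A gamma beta Zg cg hg Zb cb hb Zi ci hi.
      exact (wcomp_impl_arrow (arr := fun A x => proj1_sig (projT2 x)) P Sub
               (fun _ _ _ => iff_refl _) Pcomp (sub_arrow_comp_wcomp P Pstrong)
               gamma beta (sub cg hg) (sub cb hb) (sub ci hi)).
Qed.
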